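(* Let $T$ be a locally finite simplicial tree and let $G=\langle g_1,\dots,g_r\rangle$ be a discrete non-elementary subgroup of $\mathrm{Isom}(T)$. If $h\in G$ has infinite order, then $\langle g_i,h\rangle$ is non-elementary for some $i\in\{1,\dots,r\}$.
   Context: $\mathrm{Isom}(T)$ carries the topology of pointwise convergence. A subgroup is elementary if it stabilises a vertex, an end, or a pair of ends of $T$, and non-elementary otherwise. *)

(* A simplicial tree is given by its vertex type V and a
   symmetric irreflexive adjacency relation; Isom(T) = graph automorphisms. *)
From Stdlib Require Import List Arith.
Import ListNotations.
Set Implicit Arguments.

Section Tree.
Variable V : Type.
Variable adj : V -> V -> Prop.

Fixpoint is_walk (l : list V) : Prop :=
  match l with
  | x :: ((y :: _) as t) => adj x y /\ is_walk t
  | _ => True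
  end.

Fixpoint no_backtrack (l : list V) : Prop :=
  match l with
  | x :: ((_ :: z :: _) as t) => x <> z /\ no_backtrack t
  | _ => True
  end.

Definition reduced_walk (x y : V) (l : list V) : Prop :=
  is_walk l /\ no_backtrack l /\ head l = Some x /\ last l x = y /\ l <> [].

(* Serre's definition: a tree is a (simplicial) graph in which any two
   vertices are joined by exactly one reduced walk. *)
Definition is_tree : Prop :=
  (forall x y, adj x y -> adj y x) /\
  (forall x, ~ adj x x) /\
  (forall x y, exists l, reduced_walk x y l /\
     forall l', reduced_walk x y l' -> l' = l).

Definition locally_finite : Prop :=
  forall v, exists l : list V, forall w, adj v w -> In w l.

Definition is_isom (f : V -> V) : Prop :=
  (exists g : V -> V, (forall x, g (f x) = x) /\ (forall x, f (g x) = x)) /\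
  (forall x y, adj x y <-> adj (f x) (f y)).

Definition is_ray (r : nat -> V) : Prop :=
  forall n, adj (r n) (r (S n)) /\ r n <> r (S (S n)).

Definition same_end (r1 r2 : nat -> V) : Prop :=
  exists k m, forall n, r1 (n + k) = r2 (n + m).

(* subgroups of Isom(T) are given as predicates on functions V -> V,
   with membership understood up to extensional equality *)
Definition fixes_vertex (H : (V -> V) -> Prop) (v : V) : Prop :=
  forall g, H g -> g v = v.

Definition fixes_end (H : (V -> V) -> Prop) (r : nat -> V) : Prop :=
  forall g, H g -> same_end (fun n => g (r n)) r.

Definition fixes_end_pair (H : (V -> V) -> Prop) (r1 r2 : nat -> V) : Prop :=
  forall g, H g ->
    (same_end (fun n => g (r1 n)) r1 /\ same_end (fun n => g (r2 n)) r2) \/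
    (same_end (fun n => g (r1 n)) r2 /\ same_end (fun n => g (r2 n)) r1).

Definition elementary (H : (V -> V) -> Prop) : Prop :=
  (exists v, fixes_vertex H v) \/
  (exists r, is_ray r /\ fixes_end H r) \/
  (exists r1 r2, is_ray r1 /\ is_ray r2 /\ ~ same_end r1 r2 /\
                 fixes_end_pair H r1 r2).

End Tree.

Section Groups.
Variable V : Type.

Inductive gen_word (S : (V -> V) -> Prop) : (V -> V) -> Prop :=
| gw_id : gen_word S (fun x => x)
| gw_mul : forall s f, S s -> gen_word S f -> gen_word S (fun x => s (f x))
| gw_inv : forall s t f, S s -> (forall x, s (t x) = x /\ t (s x) = x) ->
    gen_word S f -> gen_word S (fun x => t (f x)).

Definition gen_subgroup (S : (V -> V) -> Prop) (h : V -> V) : Prop :=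
  exists f, gen_word S f /\ forall x, f x = h x.

(* discreteness for the topology of pointwise convergence (V discrete):
   every element g of G has a basic neighbourhood
   {g' | g' x = g x for x in F}, F finite, meeting G only in g *)
Definition discrete (G : (V -> V) -> Prop) : Prop :=
  forall g, G g -> exists F : list V, forall g', G g' ->
    (forall x, In x F -> g' x = g x) -> forall x, g' x = g x.

Definition infinite_order (h : V -> V) : Prop :=
  forall n, 0 < n -> exists x, Nat.iter n h x <> x.

End Groups.

(* Suppose every <g_i, h> is elementary.  Discreteness and local
   finiteness make vertex stabilisers in G finite, so h fixes no vertex and each
   g_i is "end-compatible" with A = h^2: it fixes an end fixed by A, or preserves
   a pair of distinct ends fixed by A.  An automorphism fixing three distinct ends
   fixes a vertex, so A fixes at most two ends; and if A fixes two ends e, e',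
   every element of G fixing e also fixes e' (a commutator argument, again using
   discreteness).  Hence if A fixes two ends, all g_i and so G preserve {e, e'};
   otherwise the ends fixed by A and the g_i all coincide, and G fixes that end. *)

From Stdlib Require Import List Arith Lia Classical FinFun.
Import ListNotations.
Set Implicit Arguments.
Unset Strict Implicit.

Lemma last_cons_indep (V : Type) (a : V) l d d' : last (a :: l) d = last (a :: l) d'.
Proof.
  revert a; induction l as [|b l IH]; intros a; [reflexivity|].
  exact (IH b).
Qed.

Lemma distinct_indices (E : nat -> Prop) : (forall i0, exists i, i0 <= i /\ E i) ->
  forall M, exists l, NoDup l /\ length l = M /\ forall i, In i l -> E i.
Proof.
  intros H M. induction M as [|M [l (Hnd & Hl & HE)]].
  - exists []. split; [constructor|split; [reflexivity|intros i []]].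
  - destruct (H (S (list_max l))) as [i [Hi Ei]].
    exists (i :: l). split; [|split].
    + constructor; auto. intros Hin.
      pose proof (proj1 (list_max_le l _) (le_n _)) as HF.
      rewrite Forall_forall in HF. specialize (HF i Hin). lia.
    + simpl; auto.
    + intros j [<-|Hj]; auto.
Qed.

Lemma same_end_refl (V : Type) (r : nat -> V) : same_end r r.
Proof. exists 0, 0; auto. Qed.

Lemma same_end_sym (V : Type) (r1 r2 : nat -> V) : same_end r1 r2 -> same_end r2 r1.
Proof. intros [k [m H]]; exists m, k; auto. Qed.

Lemma same_end_trans (V : Type) (r1 r2 r3 : nat -> V) :
  same_end r1 r2 -> same_end r2 r3 -> same_end r1 r3.
Proof.
  intros [k [m H]] [k' [m' H']]. exists (k + k'), (m + m'). intros n.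
  replace (n + (k + k')) with ((n + k') + k) by lia. rewrite H.
  replace (n + k' + m) with ((n + m) + k') by lia. rewrite H'. f_equal; lia.
Qed.

Lemma same_end_map (V : Type) (f : V -> V) (r1 r2 : nat -> V) :
  same_end r1 r2 -> same_end (fun n => f (r1 n)) (fun n => f (r2 n)).
Proof. intros [k [m H]]; exists k, m; intros n; rewrite H; auto. Qed.

Lemma same_end_ext (V : Type) (a a' b : nat -> V) :
  same_end a b -> (forall n, a n = a' n) -> same_end a' b.
Proof. intros [k [m H]] E; exists k, m; intros; rewrite <- E; auto. Qed.

Fixpoint lists_over (T : Type) (B : list T) (n : nat) : list (list T) :=
  match n with
  | 0 => [[]]
  | S n => flat_map (fun a => map (cons a) (lists_over B n)) B
  end.

Lemma lists_over_complete (T : Type) (B : list T) l :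
  (forall x, In x l -> In x B) -> In l (lists_over B (length l)).
Proof.
  induction l as [|a l IH]; intros H; [simpl; auto|].
  cbn [length lists_over]. apply in_flat_map. exists a; split; [apply H; simpl; auto|].
  apply in_map, IH. intros; apply H; simpl; auto.
Qed.

Lemma sequence_repeats (T : Type) (L : list T) :
  forall f : nat -> T, (forall k, In (f k) L) -> exists k l, k < l /\ f k = f l.
Proof.
  induction L as [|a L IH]; intros f H; [destruct (H 0)|].
  destruct (classic (exists k l, k < l /\ f k = a /\ f l = a)) as [(k & l & ? & ? & ?)|Hn].
  - exists k, l; split; congruence.
  - assert (HK : exists K, forall l, K < l -> f l <> a).
    { destruct (classic (exists k, f k = a)) as [[k0 Hk0]|Hn'].
      - exists k0. intros l Hl E. apply Hn. exists k0, l; auto.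
      - exists 0. intros l _ E. apply Hn'; eauto. }
    destruct HK as [K HK].
    destruct (IH (fun n => f (n + S K))) as (k & l & Hkl & E).
    + intros k. destruct (H (k + S K)) as [E|E]; auto.
      exfalso; apply (HK (k + S K)); auto; lia.
    + exists (k + S K), (l + S K). split; auto; lia.
Qed.

Lemma no_backtrack_tail (V : Type) (a : V) l : no_backtrack (a :: l) -> no_backtrack l.
Proof. destruct l as [|b [|c l]]; simpl; tauto. Qed.

Section Graphs.
Variable V : Type.
Variable adj : V -> V -> Prop.

Definition walk_from_to (x y : V) (l : list V) : Prop :=
  is_walk adj l /\ head l = Some x /\ last l x = y.

Definition preserves_adj (f : V -> V) : Prop := forall a b, adj a b -> adj (f a) (f b).

Lemma walk_from_to_single a x y : walk_from_to x y [a] -> a = x /\ y = x.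
Proof. intros (_ & [= ->] & <-). auto. Qed.

Lemma walk_from_to_cons x z y l :
  adj x z -> walk_from_to z y (z :: l) -> walk_from_to x y (x :: z :: l).
Proof.
  intros Hxz [Hw [_ Hl]]. repeat split; auto.
  change (last (z :: l) x = y). rewrite <- Hl. apply last_cons_indep.
Qed.

Lemma walk_from_to_uncons a z x y l :
  walk_from_to x y (a :: z :: l) -> a = x /\ adj x z /\ walk_from_to z y (z :: l).
Proof.
  intros [[Hxz Hw] [[= ->] Hl]]. change (last (z :: l) x = y) in Hl. repeat split; auto.
  rewrite <- Hl. apply last_cons_indep.
Qed.

Lemma reduced_walk_from_to x y l : reduced_walk adj x y l -> walk_from_to x y l.
Proof. intros (? & ? & ? & ? & ?); repeat split; auto. Qed.

Lemma walk_from_to_map (f : V -> V) (Hf : preserves_adj f) l :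
  forall x y, walk_from_to x y l -> walk_from_to (f x) (f y) (map f l).
Proof.
  induction l as [|a [|b l] IH]; intros x y Hl.
  - destruct Hl as (_ & [=] & _).
  - destruct (walk_from_to_single Hl) as [-> ->]. now repeat split.
  - destruct (walk_from_to_uncons Hl) as (-> & Hxb & Hb).
    apply walk_from_to_cons; [now apply Hf | exact (IH _ _ Hb)].
Qed.

Section Tree.
Hypothesis HT : is_tree adj.

Lemma adj_sym x y : adj x y -> adj y x.
Proof. destruct HT as [H _]; auto. Qed.

Lemma adj_irrefl x : ~ adj x x.
Proof. destruct HT as [_ [H _]]; auto. Qed.

Lemma reduced_walk_exists x y : exists l, reduced_walk adj x y l.
Proof. destruct HT as [_ [_ H]]. destruct (H x y) as [l [? ?]]; eauto. Qed.

Lemma reduced_walk_unique x y l1 l2 :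
  reduced_walk adj x y l1 -> reduced_walk adj x y l2 -> l1 = l2.
Proof.
  destruct HT as [_ [_ H]]. destruct (H x y) as [l [_ Hu]].
  intros; rewrite (Hu l1), (Hu l2); auto.
Qed.

Lemma reduced_walk_refl x : reduced_walk adj x x [x].
Proof. repeat split; simpl; auto; discriminate. Qed.

Lemma reduced_walk_edge x y : adj x y -> reduced_walk adj x y [x; y].
Proof. repeat split; simpl; auto; discriminate. Qed.

Lemma reduced_walk_prepend x z y l :
  reduced_walk adj z y l -> adj x z ->
  exists R, reduced_walk adj x y R /\ (forall v, In v R -> v = x \/ In v l).
Proof.
  intros (Hw & Hnb & Hh & Hl & Hne) Hxz.
  destruct l as [|z' l]; [congruence|]. injection Hh as ->.
  destruct l as [|w rest].
  - simpl in Hl; subst y. exists [x; z]. split; [now apply reduced_walk_edge|].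
    intros v [Hv|[Hv|[]]]; subst v; simpl; auto.
  - destruct (classic (w = x)) as [->|Hwx].
    + exists (x :: rest). split.
      * split; [|split; [|split; [|split]]].
        -- exact (proj2 Hw).
        -- exact (no_backtrack_tail Hnb).
        -- reflexivity.
        -- rewrite <- Hl. destruct rest as [|u rest]; [reflexivity|].
           exact (last_cons_indep _ _ _ _).
        -- discriminate.
      * intros v Hv; right; right; exact Hv.
    + exists (x :: z :: w :: rest). split.
      * split; [|split; [|split; [|split]]].
        -- exact (conj Hxz Hw).
        -- exact (conj (fun E => Hwx (eq_sym E)) Hnb).
        -- reflexivity.
        -- rewrite <- Hl. exact (last_cons_indep _ _ _ _).
        -- discriminate.
      * intros v [Hv|Hv]; auto.
Qed.

Inductive walk_in (P : V -> Prop) : V -> V -> Prop :=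
| walk_in_refl x : P x -> walk_in P x x
| walk_in_step x z y : P x -> adj x z -> walk_in P z y -> walk_in P x y.

Lemma walk_in_start P x y : walk_in P x y -> P x.
Proof. destruct 1; auto. Qed.

Lemma walk_in_trans P x y z : walk_in P x y -> walk_in P y z -> walk_in P x z.
Proof. induction 1; intros; auto. eapply walk_in_step; eauto. Qed.

Lemma walk_in_mono (P Q : V -> Prop) x y :
  (forall v, P v -> Q v) -> walk_in P x y -> walk_in Q x y.
Proof. intros HPQ; induction 1; [constructor|eapply walk_in_step]; eauto. Qed.

Lemma walk_in_of_walk l x y : walk_from_to x y l -> walk_in (fun v => In v l) x y.
Proof.
  revert x y; induction l as [|a [|b l] IH]; intros x y Hl.
  - destruct Hl as (_ & [=] & _).
  - destruct (walk_from_to_single Hl) as [-> ->]. constructor; simpl; auto.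
  - destruct (walk_from_to_uncons Hl) as (-> & Hxb & Hb).
    eapply walk_in_step; [simpl; auto | exact Hxb |].
    eapply walk_in_mono; [|exact (IH _ _ Hb)]. simpl; auto.
Qed.

Lemma walk_in_reduced_walk P x y :
  walk_in P x y -> forall R, reduced_walk adj x y R -> forall v, In v R -> P v.
Proof.
  induction 1 as [x Hx|x z y Hx Hxz _ IH]; intros R HR v Hv.
  - rewrite (reduced_walk_unique HR (reduced_walk_refl x)) in Hv.
    destruct Hv as [<-|[]]; exact Hx.
  - destruct (reduced_walk_exists z y) as [R' HR'].
    destruct (reduced_walk_prepend HR' Hxz) as [R0 [HR0 Hin]].
    rewrite (reduced_walk_unique HR HR0) in Hv.
    destruct (Hin v Hv) as [->|Hv']; eauto.
Qed.

Lemma walk_in_sym P x y : walk_in P x y -> walk_in P y x.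
Proof.
  induction 1 as [x Hx|x z y Hx Hxz Hzy IH]; [now constructor|].
  apply (walk_in_trans IH). eapply walk_in_step;
    [exact (walk_in_start Hzy) | exact (adj_sym Hxz) | now constructor].
Qed.

Definition ray_segment (r : nat -> V) (i n : nat) : list V := map r (seq i (S n)).

Lemma ray_segment_in (r : nat -> V) i n j : i <= j <= i + n -> In (r j) (ray_segment r i n).
Proof. intros. apply in_map, in_seq. lia. Qed.

Lemma ray_segment_length (r : nat -> V) i n : length (ray_segment r i n) = S n.
Proof. unfold ray_segment. rewrite length_map, length_seq. reflexivity. Qed.

Section Ray.
Variable r : nat -> V.
Hypothesis Hr : is_ray adj r.

Lemma ray_segment_reduced i n : reduced_walk adj (r i) (r (i + n)) (ray_segment r i n).
Proof.
  unfold ray_segment. revert i; induction n as [|n IH]; intros i.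
  - rewrite Nat.add_0_r. apply reduced_walk_refl.
  - destruct (IH (S i)) as (Hw & Hnb & _ & Hl & _).
    replace (i + S n) with (S i + n) by lia.
    change (seq i (S (S n))) with (i :: S i :: seq (S (S i)) n) in *.
    change (seq (S i) (S n)) with (S i :: seq (S (S i)) n) in *.
    split; [|split; [|split; [|split]]].
    + exact (conj (proj1 (Hr i)) Hw).
    + destruct n; [exact I|]. exact (conj (proj2 (Hr i)) Hnb).
    + reflexivity.
    + rewrite <- Hl. exact (last_cons_indep _ _ _ _).
    + discriminate.
Qed.

Lemma ray_injective i j : r i = r j -> i = j.
Proof.
  assert (Hlt : forall a b, a < b -> r a <> r b).
  { intros a b Hab E. pose proof (ray_segment_reduced a (b - a)) as Hs.
    replace (a + (b - a)) with b in Hs by lia. rewrite <- E in Hs.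
    pose proof (f_equal (@length V) (reduced_walk_unique Hs (reduced_walk_refl (r a)))) as L.
    rewrite ray_segment_length in L. simpl in L. lia. }
  intros E. destruct (lt_eq_lt_dec i j) as [[H|H]|H]; auto.
  - now destruct (Hlt i j H).
  - now destruct (Hlt j i H).
Qed.

Lemma ray_adj i j : adj (r i) (r j) -> j = S i \/ i = S j.
Proof.
  assert (Hlt : forall a b, a < b -> adj (r a) (r b) -> b = S a).
  { intros a b Hab A. pose proof (ray_segment_reduced a (b - a)) as Hs.
    replace (a + (b - a)) with b in Hs by lia.
    pose proof (f_equal (@length V) (reduced_walk_unique Hs (reduced_walk_edge A))) as L.
    rewrite ray_segment_length in L. simpl in L. lia. }
  intros A. destruct (lt_eq_lt_dec i j) as [[H|H]|H].
  - left; auto.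
  - subst. destruct (adj_irrefl A).
  - right. apply Hlt; auto. exact (adj_sym A).
Qed.

Lemma ray_walk_in a b : walk_in (fun v => exists j, v = r j) (r a) (r b).
Proof.
  assert (Hfwd : forall a n, walk_in (fun v => exists j, v = r j) (r a) (r (a + n))).
  { intros a' n; revert a'; induction n as [|n IH]; intros a'.
    - rewrite Nat.add_0_r. constructor; eauto.
    - eapply walk_in_step; [eauto | apply (Hr a') |].
      replace (a' + S n) with (S a' + n) by lia. apply IH. }
  destruct (le_lt_dec a b).
  - replace b with (a + (b - a)) by lia. apply Hfwd.
  - apply walk_in_sym. replace a with (b + (a - b)) by lia. apply Hfwd.
Qed.

End Ray.

Section TwoRays.
Variables r1 r2 : nat -> V.
Hypothesis H1 : is_ray adj r1.
Hypothesis H2 : is_ray adj r2.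

Lemma ray_follow_step i0 (Hon : forall i, i0 <= i -> exists j, r1 i = r2 j) t a b :
  i0 <= t -> r1 t = r2 a -> r1 (S t) = r2 b ->
  exists c, r1 (S (S t)) = r2 c /\ c <> a /\ (c = S b \/ b = S c).
Proof.
  intros Ht Ea Eb. destruct (Hon (S (S t))) as [c Ec]; [lia|].
  exists c. split; [exact Ec|split].
  - intros ->. apply (proj2 (H1 t)). congruence.
  - apply (ray_adj H2). rewrite <- Eb, <- Ec. apply H1.
Qed.

Lemma same_end_of_eventually_on i0 :
  (forall i, i0 <= i -> exists j, r1 i = r2 j) -> same_end r1 r2.
Proof.
  intros Hon.
  destruct (Hon i0 (le_n _)) as [j0 E0].
  destruct (Hon (S i0) (Nat.le_succ_diag_r _)) as [j1 E1].
  assert (A01 : adj (r2 j0) (r2 j1)) by (rewrite <- E0, <- E1; apply H1).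
  destruct (ray_adj H2 A01) as [->|Hdown].
  - exists i0, j0.
    assert (G : forall n, r1 (n + i0) = r2 (n + j0) /\ r1 (S n + i0) = r2 (S n + j0));
      [|intro n; apply G].
    induction n as [|n [Ia Ib]]; [split; auto|].
    split; [exact Ib|].
    destruct (ray_follow_step Hon (t := n + i0) ltac:(lia) Ia Ib) as (c & Ec & Hca & [Hc|Hc]).
    + change (r1 (S (S (n + i0))) = r2 (S (S n) + j0)). rewrite Ec, Hc. f_equal; lia.
    + exfalso. apply Hca. simpl in Hc. lia.
  - exfalso.
    assert (G : forall b t a, i0 <= t -> r1 t = r2 a -> r1 (S t) = r2 b -> a = S b -> False);
      [|exact (G j1 i0 j0 (le_n _) E0 E1 Hdown)].
    induction b as [|b IH]; intros t a Ht Ea Eb Hab;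
      destruct (ray_follow_step Hon Ht Ea Eb) as (c & Ec & Hca & [Hc|Hc]);
      try (apply Hca; lia).
    injection Hc as ->. exact (IH (S t) (S c) ltac:(lia) Eb Ec eq_refl).
Qed.

(* If infinitely far out along r1 there are walks of bounded length from r1 to r2,
   then r1 eventually runs inside r2: otherwise the geodesic from r1 0 to a far
   vertex of r1 would contain more off-r2 vertices than a fixed walk to r2 and
   the bounded walks can supply. *)
Lemma eventually_on_of_close C :
  (forall N, exists i j Q, N <= i /\ walk_from_to (r1 i) (r2 j) Q /\ length Q <= C) ->
  exists i0, forall i, i0 <= i -> exists j, r1 i = r2 j.
Proof.
  intros Hc. apply NNPP; intro Hn.
  assert (Hoff : forall i0, exists i, i0 <= i /\ ~ exists j, r1 i = r2 j).
  { intros i0. apply NNPP; intro Hn'. apply Hn. exists i0. intros i Hi.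
    apply NNPP; intro. apply Hn'; eauto. }
  destruct (reduced_walk_exists (r1 0) (r2 0)) as [Z HZ].
  destruct (distinct_indices Hoff (S (length Z + C))) as (l & Hnd & Hl & Hl_off).
  destruct (Hc (list_max l)) as (I & J & Q & HI & HQ & HlQ).
  set (P := fun v => In v Z \/ (exists j, v = r2 j) \/ In v Q).
  assert (W : walk_in P (r1 0) (r1 I)).
  { eapply walk_in_trans; [|eapply walk_in_trans].
    - apply (walk_in_mono (P := fun v => In v Z)); [unfold P; auto|].
      apply walk_in_of_walk, reduced_walk_from_to, HZ.
    - apply (walk_in_mono (P := fun v => exists j, v = r2 j)); [unfold P; auto|].
      apply (ray_walk_in H2 0 J).
    - apply (walk_in_mono (P := fun v => In v Q)); [unfold P; auto|].
      apply walk_in_sym, walk_in_of_walk, HQ. }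
  pose proof (walk_in_reduced_walk W (ray_segment_reduced H1 0 I)) as HW.
  assert (Hincl : incl (map r1 l) (Z ++ Q)).
  { intros v Hv. apply in_map_iff in Hv. destruct Hv as [i [<- Hi]].
    assert (Hi_seg : In (r1 i) (ray_segment r1 0 I)).
    { apply ray_segment_in.
      pose proof (proj1 (list_max_le l _) (le_n _)) as HF.
      rewrite Forall_forall in HF. specialize (HF i Hi). lia. }
    destruct (HW _ Hi_seg) as [A|[A|A]]; apply in_or_app; auto.
    destruct (Hl_off i Hi A). }
  apply NoDup_incl_length in Hincl.
  - rewrite length_map, length_app in Hincl. lia.
  - apply Injective_map_NoDup; [intros a b; apply (ray_injective H1)|exact Hnd].
Qed.

Lemma same_end_of_close C :
  (forall N, exists i j Q, N <= i /\ walk_from_to (r1 i) (r2 j) Q /\ length Q <= C) ->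
  same_end r1 r2.
Proof.
  intros Hc. destruct (eventually_on_of_close Hc) as [i0 Hi0].
  exact (same_end_of_eventually_on Hi0).
Qed.

End TwoRays.

Definition end_fixed_by (f : V -> V) (r : nat -> V) : Prop := same_end (fun n => f (r n)) r.

Definition translates (f : V -> V) (r : nat -> V) (k m : nat) : Prop :=
  forall n, f (r (n + k)) = r (n + m).

Lemma translates_iter (f : V -> V) r k m :
  translates f r k m -> k <= m -> forall N, Nat.iter N f (r k) = r (k + N * (m - k)).
Proof.
  intros H Hkm N. induction N as [|N IH]; simpl.
  - f_equal; lia.
  - rewrite IH. replace (k + N * (m - k)) with (N * (m - k) + k) by lia.
    rewrite H. f_equal. lia.
Qed.

Lemma translates_inv (f g : V -> V) r k m :
  (forall x, g (f x) = x) -> translates f r k m -> translates g r m k.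
Proof. intros Hgf H n. rewrite <- H. auto. Qed.

Lemma preserves_adj_iter (f : V -> V) : preserves_adj f -> forall N, preserves_adj (Nat.iter N f).
Proof. intros H N; induction N; intros a b Hab; simpl; auto. Qed.

(* Two ends along which f translates forward coincide: the powers of f carry one
   fixed walk between the rays further and further out. *)
Lemma same_end_of_forward_translations (f : V -> V) (Hf : preserves_adj f) r1 r2 k1 m1 k2 m2 :
  is_ray adj r1 -> is_ray adj r2 ->
  translates f r1 k1 m1 -> k1 < m1 -> translates f r2 k2 m2 -> k2 < m2 -> same_end r1 r2.
Proof.
  intros H1 H2 T1 L1 T2 L2.
  destruct (reduced_walk_exists (r1 k1) (r2 k2)) as [P HP].
  apply (same_end_of_close H1 H2 (C := length P)).
  intros N. exists (k1 + N * (m1 - k1)), (k2 + N * (m2 - k2)), (map (Nat.iter N f) P).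
  split; [nia|split].
  - rewrite <- (translates_iter T1), <- (translates_iter T2); try lia.
    apply walk_from_to_map; [apply preserves_adj_iter; auto|].
    apply reduced_walk_from_to; auto.
  - rewrite length_map; auto.
Qed.

Section Automorphism.
Variables f g : V -> V.
Hypothesis Hf : preserves_adj f.
Hypothesis Hg : preserves_adj g.
Hypothesis Hgf : forall x, g (f x) = x.

Lemma same_end_of_translations r1 r2 k1 m1 k2 m2 :
  is_ray adj r1 -> is_ray adj r2 -> translates f r1 k1 m1 -> translates f r2 k2 m2 ->
  (k1 < m1 /\ k2 < m2) \/ (m1 < k1 /\ m2 < k2) -> same_end r1 r2.
Proof.
  intros H1 H2 T1 T2 [[L1 L2]|[L1 L2]].
  - exact (same_end_of_forward_translations Hf H1 H2 T1 L1 T2 L2).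
  - exact (same_end_of_forward_translations Hg H1 H2
             (translates_inv Hgf T1) L1 (translates_inv Hgf T2) L2).
Qed.

(* An automorphism fixing three distinct ends fixes a vertex: an end fixed by f
   is either attracting, repelling, or contains a fixed vertex, and two ends of
   the same kind coincide. *)
Lemma three_ends_fixed_vertex x y z :
  is_ray adj x -> is_ray adj y -> is_ray adj z ->
  end_fixed_by f x -> end_fixed_by f y -> end_fixed_by f z ->
  ~ same_end x y -> ~ same_end x z -> ~ same_end y z -> exists v, f v = v.
Proof.
  intros Rx Ry Rz [kx [mx Tx]] [ky [my Ty]] [kz [mz Tz]] Nxy Nxz Nyz.
  destruct (lt_eq_lt_dec kx mx) as [[Lx|<-]|Lx]; [| now exists (x kx); apply (Tx 0) |];
  (destruct (lt_eq_lt_dec ky my) as [[Ly|<-]|Ly]; [| now exists (y ky); apply (Ty 0) |]);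
  (destruct (lt_eq_lt_dec kz mz) as [[Lz|<-]|Lz]; [| now exists (z kz); apply (Tz 0) |]);
  exfalso;
  first [ apply Nxy; apply (same_end_of_translations Rx Ry Tx Ty); lia
        | apply Nxz; apply (same_end_of_translations Rx Rz Tx Tz); lia
        | apply Nyz; apply (same_end_of_translations Ry Rz Ty Tz); lia ].
Qed.

End Automorphism.

Definition inverse_pair (f g : V -> V) : Prop :=
  (forall x, g (f x) = x) /\ (forall x, f (g x) = x).

Definition end_pair_preserved_by (f : V -> V) (r1 r2 : nat -> V) : Prop :=
  (end_fixed_by f r1 /\ end_fixed_by f r2) \/
  (same_end (fun n => f (r1 n)) r2 /\ same_end (fun n => f (r2 n)) r1).

Section Generated.
Variable S : (V -> V) -> Prop.

Lemma gen_word_comp w1 w2 : gen_word S w1 -> gen_word S w2 -> gen_word S (fun x => w1 (w2 x)).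
Proof.
  intros H1 H2; induction H1.
  - exact H2.
  - exact (gw_mul s H IHgen_word).
  - exact (gw_inv s t H H0 IHgen_word).
Qed.

Lemma gen_subgroup_id : gen_subgroup S (fun x => x).
Proof. exists (fun x => x); split; [constructor|auto]. Qed.

Lemma gen_subgroup_gen s : S s -> gen_subgroup S s.
Proof. intros H; exists (fun x => s x); split; auto. exact (gw_mul s H (gw_id S)). Qed.

Lemma gen_subgroup_comp f g :
  gen_subgroup S f -> gen_subgroup S g -> gen_subgroup S (fun x => f (g x)).
Proof.
  intros [w [Hw E]] [w' [Hw' E']]. exists (fun x => w (w' x)); split.
  - apply gen_word_comp; auto.
  - intros; rewrite E', E; auto.
Qed.

Lemma gen_subgroup_iter f : gen_subgroup S f -> forall n, gen_subgroup S (Nat.iter n f).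
Proof.
  intros H n; induction n; simpl; [apply gen_subgroup_id|exact (gen_subgroup_comp H IHn)].
Qed.

Lemma gen_subgroup_ind (Q : (V -> V) -> Prop) :
  Q (fun x => x) ->
  (forall s f, S s -> Q f -> Q (fun x => s (f x))) ->
  (forall s t f, S s -> (forall x, s (t x) = x /\ t (s x) = x) -> Q f -> Q (fun x => t (f x))) ->
  (forall f g, Q f -> (forall x, f x = g x) -> Q g) ->
  forall f, gen_subgroup S f -> Q f.
Proof. intros H0 H1 H2 H3 f [w [Hw E]]. apply (H3 w); auto. clear E. induction Hw; eauto. Qed.

Lemma gen_subgroup_fixes_end r :
  (forall s, S s -> end_fixed_by s r) -> forall f, gen_subgroup S f -> end_fixed_by f r.
Proof.
  intros H. apply gen_subgroup_ind.
  - apply same_end_refl.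
  - intros s f Hs Hf. exact (same_end_trans (same_end_map s Hf) (H s Hs)).
  - intros s t f Hs Hst Hf. eapply same_end_trans; [apply (same_end_map t Hf)|].
    apply same_end_sym. apply (same_end_ext (a := fun n => t (s (r n))));
      [apply same_end_map, H, Hs | intros; apply Hst].
  - intros f g Hf E. exact (same_end_ext Hf (fun n => E (r n))).
Qed.

Lemma end_pair_preserved_comp f g r1 r2 :
  end_pair_preserved_by f r1 r2 -> end_pair_preserved_by g r1 r2 ->
  end_pair_preserved_by (fun x => f (g x)) r1 r2.
Proof.
  intros [[A1 A2]|[A1 A2]] [[B1 B2]|[B1 B2]]; [left|right|right|left]; split;
    solve [ eapply same_end_trans; [apply (same_end_map f B1)|assumption]
          | eapply same_end_trans; [apply (same_end_map f B2)|assumption] ].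
Qed.

Lemma gen_subgroup_preserves_end_pair r1 r2 :
  (forall s, S s -> end_pair_preserved_by s r1 r2) ->
  forall f, gen_subgroup S f -> end_pair_preserved_by f r1 r2.
Proof.
  intros H. apply gen_subgroup_ind.
  - left; split; apply same_end_refl.
  - intros s f Hs Hf. exact (end_pair_preserved_comp (H s Hs) Hf).
  - intros s t f Hs Hst Hf. apply (end_pair_preserved_comp (f := t)); [|exact Hf].
    assert (Ht : forall a b, same_end (fun n => s (a n)) b -> same_end (fun n => t (b n)) a).
    { intros a b E. apply same_end_sym.
      exact (same_end_ext (same_end_map t E) (fun n => proj2 (Hst (a n)))). }
    destruct (H s Hs) as [[A1 A2]|[A1 A2]]; [left|right]; split; apply Ht; assumption.
  - intros f g [[A1 A2]|[A1 A2]] E; [left|right]; split;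
      eapply same_end_ext; try eassumption; intros; apply E.
Qed.

Lemma is_isom_preserves_adj f : is_isom adj f -> preserves_adj f.
Proof. intros [_ H] a b; apply H. Qed.

Section Isometries.
Hypothesis HS : forall s, S s -> is_isom adj s.

Lemma gen_subgroup_preserves_adj : forall f, gen_subgroup S f -> preserves_adj f.
Proof.
  apply gen_subgroup_ind.
  - intros a b; auto.
  - intros s f Hs Hf a b Hab. apply (is_isom_preserves_adj (HS Hs)), Hf, Hab.
  - intros s t f Hs Hst Hf a b Hab. apply (proj2 (proj2 (HS Hs) _ _)).
    rewrite (proj1 (Hst (f a))), (proj1 (Hst (f b))). apply Hf, Hab.
  - intros f g Hf E a b Hab. rewrite <- !E. apply Hf, Hab.
Qed.

Lemma gen_subgroup_inverse :
  forall f, gen_subgroup S f -> exists g, gen_subgroup S g /\ inverse_pair f g.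
Proof.
  apply gen_subgroup_ind.
  - exists (fun x => x); split; [apply gen_subgroup_id|split; auto].
  - intros s f Hs [g [Hg [I1 I2]]].
    destruct (HS Hs) as [[t [T1 T2]] _].
    exists (fun x => g (t x)); split; [|split; intros; [rewrite T1, I1|rewrite I2, T2]; auto].
    apply (gen_subgroup_comp Hg). exists (fun x => t x); split; [|auto].
    apply gw_inv with s; [exact Hs|split; auto|constructor].
  - intros s t f Hs Hst [g [Hg [I1 I2]]].
    exists (fun x => g (s x)); split;
      [|split; intros; [rewrite (proj1 (Hst _)), I1|rewrite I2, (proj2 (Hst _))]; auto].
    exact (gen_subgroup_comp Hg (gen_subgroup_gen Hs)).
  - intros f g [h [Hh [I1 I2]]] E. exists h; split; [exact Hh|split; intros; rewrite <- E; auto].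
Qed.

End Isometries.
End Generated.

Lemma iter_mul (f : V -> V) p n x : Nat.iter n (Nat.iter p f) x = Nat.iter (n * p) f x.
Proof. induction n; simpl; auto. rewrite IHn, Nat.iter_add. auto. Qed.

Lemma iter_cancel (f g : V -> V) : (forall x, f (g x) = x) ->
  forall p x, Nat.iter p f (Nat.iter p g x) = x.
Proof.
  intros H p; induction p; intros x; auto.
  rewrite Nat.iter_succ_r. simpl. rewrite H. auto.
Qed.

Lemma infinite_order_iter (f : V -> V) p :
  infinite_order f -> 0 < p -> infinite_order (Nat.iter p f).
Proof.
  intros H Hp n Hn. destruct (H (n * p)) as [x Hx]; [nia|].
  exists x. rewrite iter_mul; auto.
Qed.

Lemma infinite_order_inverse (f g : V -> V) :
  inverse_pair f g -> infinite_order f -> infinite_order g.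
Proof.
  intros [I1 I2] H n Hn. destruct (H n Hn) as [x Hx]. apply NNPP; intro Hc.
  apply Hx. assert (E : forall y, Nat.iter n g y = y).
  { intros y; apply NNPP; intro; apply Hc; eauto. }
  rewrite <- (E x) at 1. apply iter_cancel; auto.
Qed.

Lemma inverse_pair_injective (f g : V -> V) : inverse_pair f g -> forall a b, f a = f b -> a = b.
Proof. intros [I1 _] a b E. rewrite <- (I1 a), <- (I1 b), E; auto. Qed.

Lemma end_fixed_inverse (f g : V -> V) r : inverse_pair f g -> end_fixed_by f r -> end_fixed_by g r.
Proof.
  intros [I1 I2] H. apply same_end_sym.
  exact (same_end_ext (same_end_map g H) (fun n => I1 (r n))).
Qed.

Lemma end_fixed_iter (f : V -> V) r : end_fixed_by f r -> forall p, end_fixed_by (Nat.iter p f) r.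
Proof.
  intros H p; induction p; simpl; [apply same_end_refl|].
  exact (same_end_trans (same_end_map f IHp) H).
Qed.

Lemma end_fixed_comp (f g : V -> V) r :
  end_fixed_by f r -> end_fixed_by g r -> end_fixed_by (fun x => f (g x)) r.
Proof. intros Hf Hg. exact (same_end_trans (same_end_map f Hg) Hf). Qed.

Lemma same_end_of_image (f g : V -> V) r z :
  inverse_pair f g -> end_fixed_by f r -> same_end (fun n => f (z n)) r -> same_end z r.
Proof.
  intros Hfg Hr Hz. pose proof (end_fixed_inverse Hfg Hr) as Hg.
  apply (same_end_ext (a := fun n => g (f (z n)))); [|intros; apply (proj1 Hfg)].
  exact (same_end_trans (same_end_map g Hz) Hg).
Qed.

Lemma translates_comp (f f' : V -> V) r k1 m1 k2 m2 :
  translates f r k1 m1 -> translates f' r k2 m2 ->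
  translates (fun x => f (f' x)) r (k1 + k2) (m1 + m2).
Proof.
  intros H1 H2 n. replace (n + (k1 + k2)) with ((n + k1) + k2) by lia. rewrite H2.
  replace (n + k1 + m2) with ((n + m2) + k1) by lia. rewrite H1. f_equal; lia.
Qed.

Lemma translates_shift (f : V -> V) r k m K :
  translates f r k m -> k <= K -> translates f r K (K + m - k).
Proof. intros H HK n. replace (n + K) with ((n + K - k) + k) by lia. rewrite H. f_equal; lia. Qed.

Lemma ray_image (f g : V -> V) r :
  is_ray adj r -> preserves_adj f -> inverse_pair f g -> is_ray adj (fun n => f (r n)).
Proof.
  intros Hr Hf Hfg n. destruct (Hr n) as [Ha Hb]. split; [now apply Hf|].
  intros E. apply Hb. exact (inverse_pair_injective Hfg E).
Qed.

Lemma end_fixed_transport (f : V -> V) a b : end_fixed_by f a -> same_end a b -> end_fixed_by f b.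
Proof.
  intros H E. eapply same_end_trans; [apply same_end_map, same_end_sym, E|].
  exact (same_end_trans H E).
Qed.

Lemma end_pair_preserved_transport (f : V -> V) a b a' b' :
  end_pair_preserved_by f a b -> same_end a a' -> same_end b b' -> end_pair_preserved_by f a' b'.
Proof.
  intros [[H1 H2]|[H1 H2]] Ea Eb; [left|right]; split;
    try solve [eapply end_fixed_transport; eassumption];
    (eapply same_end_trans; [apply same_end_map, same_end_sym; eassumption|]);
    eapply same_end_trans; eassumption.
Qed.

Lemma end_pair_preserved_swap (f : V -> V) a b :
  end_pair_preserved_by f a b -> end_pair_preserved_by f b a.
Proof. intros [[H1 H2]|[H1 H2]]; [left|right]; auto. Qed.

Lemma end_pair_preserved_square (f : V -> V) a b :
  end_pair_preserved_by f a b ->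
  end_fixed_by (Nat.iter 2 f) a /\ end_fixed_by (Nat.iter 2 f) b.
Proof.
  intros [[H1 H2]|[H1 H2]]; split; simpl.
  - exact (same_end_trans (same_end_map f H1) H1).
  - exact (same_end_trans (same_end_map f H2) H2).
  - exact (same_end_trans (same_end_map f H1) H2).
  - exact (same_end_trans (same_end_map f H2) H1).
Qed.

Inductive walk_len : nat -> V -> V -> Prop :=
| walk_len_0 x : walk_len 0 x x
| walk_len_S n x z y : adj x z -> walk_len n z y -> walk_len (S n) x y.

Lemma walk_len_of_walk l : forall x y, walk_from_to x y l -> walk_len (length l - 1) x y.
Proof.
  induction l as [|a [|b l] IH]; intros x y Hl.
  - destruct Hl as (_ & [=] & _).
  - destruct (walk_from_to_single Hl) as [-> ->]. constructor.
  - destruct (walk_from_to_uncons Hl) as (-> & Hxb & Hb).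
    specialize (IH _ _ Hb). simpl in *. rewrite Nat.sub_0_r in *.
    exact (walk_len_S Hxb IH).
Qed.

Lemma walk_len_exists x y : exists n, walk_len n x y.
Proof.
  destruct (reduced_walk_exists x y) as [l Hl].
  eexists. apply walk_len_of_walk, reduced_walk_from_to, Hl.
Qed.

Lemma walk_len_map f : preserves_adj f -> forall n x y, walk_len n x y -> walk_len n (f x) (f y).
Proof. intros Hf n x y H; induction H; econstructor; eauto. Qed.

Section LocallyFinite.
Hypothesis HLF : locally_finite adj.

Lemma ball_finite n : forall x, exists B, forall y, walk_len n x y -> In y B.
Proof.
  induction n as [|n IH]; intros x.
  - exists [x]. intros y H; inversion H; subst; simpl; auto.
  - destruct (HLF x) as [L HL].
    assert (HB : exists B, forall w, In w L -> forall y, walk_len n w y -> In y B).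
    { clear HL. induction L as [|w L [B' HB']].
      - exists []. intros w [].
      - destruct (IH w) as [Bw HBw]. exists (Bw ++ B').
        intros w' [<-|Hw'] y Hy; apply in_or_app; eauto. }
    destruct HB as [B HB]. exists B. intros y H. inversion H; subst. eauto.
Qed.

Lemma stabiliser_images_finite v F :
  exists B, forall f, preserves_adj f -> f v = v -> forall x, In x F -> In (f x) B.
Proof.
  induction F as [|x F [B' HB']].
  - exists []. intros f _ _ x [].
  - destruct (walk_len_exists v x) as [n Hn].
    destruct (ball_finite n v) as [Bx HBx]. exists (Bx ++ B').
    intros f Af Fv y [<-|Hy]; apply in_or_app; [left|right; eauto].
    apply HBx. rewrite <- Fv. apply walk_len_map; auto.
Qed.

Section Discrete.
Variable S : (V -> V) -> Prop.
Hypothesis HS : forall s, S s -> is_isom adj s.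
Hypothesis Hdisc : discrete (gen_subgroup S).

(* Vertex stabilisers of a discrete group are finite: every sequence of elements
   fixing v repeats.  Discreteness at the identity gives a finite set F on which
   only the identity acts trivially, and the stabiliser of v has only finitely
   many possible actions on F. *)
Lemma stabiliser_sequence_repeats (f : nat -> V -> V) v :
  (forall k, gen_subgroup S (f k)) -> (forall k, f k v = v) ->
  exists k l, k < l /\ forall x, f k x = f l x.
Proof.
  intros HG Hv.
  destruct (Hdisc (gen_subgroup_id S)) as [F0 HF0].
  destruct (stabiliser_images_finite v F0) as [B HB].
  destruct (@sequence_repeats _ (lists_over B (length F0)) (fun k => map (f k) F0))
    as (k & l & Hkl & E).
  - intros k. rewrite <- (length_map (f k) F0). apply lists_over_complete.
    intros y Hy. apply in_map_iff in Hy. destruct Hy as [x [<- Hx]].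
    apply HB; auto. exact (gen_subgroup_preserves_adj HS (HG k)).
  - exists k, l; split; [exact Hkl|].
    destruct (gen_subgroup_inverse HS (HG k)) as (fi & Hfi & I1 & I2).
    assert (Hid : forall x, fi (f l x) = x).
    { apply (HF0 (fun x => fi (f l x))).
      - exact (gen_subgroup_comp Hfi (HG l)).
      - intros x Hx. rewrite <- (proj1 map_ext_in_iff E x Hx). auto. }
    intros x. rewrite <- (Hid x) at 1. apply I2.
Qed.

Lemma fixed_vertex_finite_order A v :
  gen_subgroup S A -> A v = v -> exists p, 0 < p /\ forall x, Nat.iter p A x = x.
Proof.
  intros HA Av.
  destruct (@stabiliser_sequence_repeats (fun k => Nat.iter k A) v) as (k & l & Hkl & E).
  - intros; apply gen_subgroup_iter; auto.
  - intros k; induction k; simpl; congruence.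
  - destruct (gen_subgroup_inverse HS HA) as (B & _ & I1 & _).
    exists (l - k). split; [lia|]. intros x.
    assert (Hinj : forall n y z, Nat.iter n A y = Nat.iter n A z -> y = z).
    { induction n; simpl; intros y z Eyz; auto.
      apply IHn. rewrite <- (I1 (Nat.iter n A y)), Eyz. auto. }
    apply (Hinj k). rewrite <- Nat.iter_add. replace (k + (l - k)) with l by lia.
    symmetry; apply E.
Qed.

Lemma infinite_order_no_fixed_vertex A v : gen_subgroup S A -> infinite_order A -> A v <> v.
Proof.
  intros HA Hinf Av. destruct (fixed_vertex_finite_order HA Av) as (p & Hp & Ep).
  destruct (Hinf p Hp) as [w Hw]. exact (Hw (Ep w)).
Qed.

Lemma at_most_two_fixed_ends A x y z : gen_subgroup S A -> infinite_order A ->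
  is_ray adj x -> is_ray adj y -> is_ray adj z ->
  end_fixed_by A x -> end_fixed_by A y -> end_fixed_by A z ->
  ~ same_end x y -> ~ same_end x z -> ~ same_end y z -> False.
Proof.
  intros HA Hinf Rx Ry Rz Fx Fy Fz Nxy Nxz Nyz.
  destruct (gen_subgroup_inverse HS HA) as (B & HB & I1 & I2).
  destruct (three_ends_fixed_vertex (gen_subgroup_preserves_adj HS HA)
              (gen_subgroup_preserves_adj HS HB) I1 Rx Ry Rz Fx Fy Fz Nxy Nxz Nyz) as [v Hv].
  exact (infinite_order_no_fixed_vertex HA Hinf Hv).
Qed.

Lemma third_fixed_end A r r' z : gen_subgroup S A -> infinite_order A ->
  is_ray adj r -> is_ray adj r' -> is_ray adj z -> ~ same_end r r' ->
  end_fixed_by A r -> end_fixed_by A r' -> end_fixed_by A z -> same_end z r \/ same_end z r'.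
Proof.
  intros HA Hinf Rr Rr' Rz N Fr Fr' Fz. apply NNPP; intro Hn.
  apply (at_most_two_fixed_ends HA Hinf Rr Rr' Rz Fr Fr' Fz N);
    intros E; apply Hn; [left|right]; exact (same_end_sym E).
Qed.

Section TwoFixedEnds.
Variables (A : V -> V) (r r' : nat -> V).
Hypothesis HA : gen_subgroup S A.
Hypothesis Hinf : infinite_order A.
Hypothesis Rr : is_ray adj r.
Hypothesis Rr' : is_ray adj r'.
Hypothesis Nrr' : ~ same_end r r'.
Hypothesis Fr : end_fixed_by A r.
Hypothesis Fr' : end_fixed_by A r'.

(* If A translates forward along r and c fixes the tail of r from K on pointwise,
   then some power of A commutes with c: the conjugates A^-j c A^j all fix r K,
   and the stabiliser of r K is finite. *)
Lemma power_commutes_with_tail_fixer c k m K :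
  gen_subgroup S c -> translates A r k m -> k < m -> k <= K ->
  (forall p, K <= p -> c (r p) = r p) ->
  exists p, 0 < p /\ forall y, Nat.iter p A (c y) = c (Nat.iter p A y).
Proof.
  intros Hc TA Hkm HkK Hfix.
  destruct (gen_subgroup_inverse HS HA) as (B & HB & I1 & I2).
  pose proof (translates_shift TA HkK) as TAK.
  assert (HK : K <= K + m - k) by lia.
  destruct (@stabiliser_sequence_repeats (fun j x => Nat.iter j B (c (Nat.iter j A x))) (r K))
    as (j1 & j2 & Hj & E).
  - intros j. apply gen_subgroup_comp; [apply gen_subgroup_iter; auto|].
    apply gen_subgroup_comp; [exact Hc|apply gen_subgroup_iter; auto].
  - intros j. cbv beta. rewrite (translates_iter TAK HK j), Hfix by apply Nat.le_add_r.
    rewrite <- (translates_iter TAK HK j). apply iter_cancel, I1.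
  - exists (j2 - j1). split; [lia|]. intros y.
    specialize (E (Nat.iter j1 B y)). cbv beta in E.
    rewrite (iter_cancel I2) in E. apply (f_equal (Nat.iter j2 A)) in E.
    rewrite (iter_cancel I2) in E.
    replace j2 with ((j2 - j1) + j1) in E by lia.
    rewrite !Nat.iter_add, !(iter_cancel I2) in E. exact E.
Qed.

(* An element of G fixing the end r and commuting with a power of A also fixes r':
   that power fixes r, r' and c r', so c r' is one of the ends r, r'. *)
Lemma end_fixed_of_commuting c p :
  gen_subgroup S c -> 0 < p -> (forall y, Nat.iter p A (c y) = c (Nat.iter p A y)) ->
  end_fixed_by c r -> end_fixed_by c r'.
Proof.
  intros Hc Hp Comm Fc.
  destruct (gen_subgroup_inverse HS Hc) as (ci & _ & Hcci).
  assert (Fp : end_fixed_by (Nat.iter p A) (fun n => c (r' n))).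
  { apply (same_end_ext (a := fun n => c (Nat.iter p A (r' n)))); [|intros; symmetry; apply Comm].
    apply same_end_map, end_fixed_iter, Fr'. }
  destruct (third_fixed_end (gen_subgroup_iter HA p) (infinite_order_iter Hinf Hp) Rr Rr'
              (ray_image Rr' (gen_subgroup_preserves_adj HS Hc) Hcci) Nrr'
              (end_fixed_iter Fr p) (end_fixed_iter Fr' p) Fp) as [E|E].
  - destruct (Nrr' (same_end_sym (same_end_of_image Hcci Fc E))).
  - exact E.
Qed.

(* The commutator c = g A g^-1 A^-1 fixes a tail of r pointwise, so a power of A
   commutes with it and c fixes r'; hence A fixes the end of g^-1 r', which must
   then be r'. *)
Lemma end_fixed_transfer_forward g k m :
  translates A r k m -> k < m -> gen_subgroup S g -> end_fixed_by g r -> end_fixed_by g r'.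
Proof.
  intros TA Hkm Hg [kg [mg Tg]].
  destruct (gen_subgroup_inverse HS HA) as (B & HB & HAB).
  destruct (gen_subgroup_inverse HS Hg) as (gi & Hgi & Hggi).
  set (c := fun x => g (A (gi (B x)))).
  assert (Hc : gen_subgroup S c).
  { exact (gen_subgroup_comp Hg (gen_subgroup_comp HA (gen_subgroup_comp Hgi HB))). }
  set (K := kg + k + mg + m).
  assert (Tc : translates c r K K).
  { intros n. pose proof (translates_comp Tg (translates_comp TA (translates_comp
      (translates_inv (proj1 Hggi) Tg) (translates_inv (proj1 HAB) TA))) n) as H.
    replace (kg + (k + (mg + m))) with K in H by (unfold K; lia).
    replace (mg + (m + (kg + k))) with K in H by (unfold K; lia). exact H. }
  destruct (power_commutes_with_tail_fixer Hc TA Hkm (K := K)) as (p & Hp & Comm).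
  - unfold K; lia.
  - intros q Hq. replace q with ((q - K) + K) by lia. apply Tc.
  - assert (Fc' : end_fixed_by c r')
      by (apply (end_fixed_of_commuting Hc Hp Comm); exists K, K; exact Tc).
    assert (FgA : end_fixed_by (fun x => g (A (gi x))) r').
    { apply (same_end_ext (a := fun n => c (A (r' n))));
        [|intros; unfold c; rewrite (proj1 HAB); auto].
      exact (end_fixed_comp Fc' Fr'). }
    assert (FA : end_fixed_by A (fun n => gi (r' n))).
    { apply (same_end_ext (a := fun n => gi (g (A (gi (r' n)))))); [|intros; apply (proj1 Hggi)].
      exact (same_end_map gi FgA). }
    assert (Fgi : end_fixed_by gi r) by (apply (end_fixed_inverse Hggi); exists kg, mg; exact Tg).
    destruct (third_fixed_end HA Hinf Rr Rr' (ray_image Rr' (gen_subgroup_preserves_adj HS Hgi)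
                (conj (proj2 Hggi) (proj1 Hggi))) Nrr' Fr Fr' FA) as [E|E].
    + destruct (Nrr' (same_end_sym (same_end_of_image (conj (proj2 Hggi) (proj1 Hggi)) Fgi E))).
    + apply same_end_sym. apply (same_end_ext (a := fun n => g (gi (r' n))));
        [exact (same_end_map g E) | intros; apply (proj2 Hggi)].
Qed.

End TwoFixedEnds.

Lemma end_fixed_transfer A r r' g :
  gen_subgroup S A -> infinite_order A -> is_ray adj r -> is_ray adj r' -> ~ same_end r r' ->
  end_fixed_by A r -> end_fixed_by A r' ->
  gen_subgroup S g -> end_fixed_by g r -> end_fixed_by g r'.
Proof.
  intros HA Hinf Rr Rr' N Fr Fr' Hg Fg. pose proof Fr as [k [m TA]].
  destruct (lt_eq_lt_dec k m) as [[L| <-]|L].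
  - exact (end_fixed_transfer_forward HA Hinf Rr Rr' N Fr Fr' TA L Hg Fg).
  - destruct (infinite_order_no_fixed_vertex HA Hinf (TA 0)).
  - destruct (gen_subgroup_inverse HS HA) as (B & HB & HAB).
    exact (end_fixed_transfer_forward HB (infinite_order_inverse HAB Hinf) Rr Rr' N
             (end_fixed_inverse HAB Fr) (end_fixed_inverse HAB Fr')
             (translates_inv (proj1 HAB) TA) L Hg Fg).
Qed.

Definition end_compatible (s A : V -> V) : Prop :=
  (exists z, is_ray adj z /\ end_fixed_by s z /\ end_fixed_by A z) \/
  (exists z z', is_ray adj z /\ is_ray adj z' /\ ~ same_end z z' /\
     end_pair_preserved_by s z z' /\ end_fixed_by A z /\ end_fixed_by A z').

Lemma elementary_end_compatible g h :
  (forall v, h v <> v) -> elementary adj (gen_subgroup (fun f => f = g \/ f = h)) ->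
  end_compatible g (Nat.iter 2 h).
Proof.
  intros Hh Hel.
  assert (Hg : gen_subgroup (fun f => f = g \/ f = h) g) by (apply gen_subgroup_gen; auto).
  assert (Hh' : gen_subgroup (fun f => f = g \/ f = h) h) by (apply gen_subgroup_gen; auto).
  destruct Hel as [[v Hv]|[(z & Rz & Fz)|(z & z' & Rz & Rz' & N & Fzz')]].
  - destruct (Hh v (Hv h Hh')).
  - left. exists z. exact (conj Rz (conj (Fz g Hg) (end_fixed_iter (Fz h Hh') 2))).
  - right. exists z, z'. pose proof (end_pair_preserved_square (Fzz' h Hh')) as [F1 F2].
    exact (conj Rz (conj Rz' (conj N (conj (Fzz' g Hg) (conj F1 F2))))).
Qed.

Lemma generator_exists h :
  gen_subgroup S h -> infinite_order h -> exists s, S s.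
Proof.
  intros HG Hinf. apply NNPP; intros Hno.
  assert (Hid : forall f, gen_subgroup S f -> forall x, f x = x).
  { apply (gen_subgroup_ind (Q := fun f => forall x, f x = x)); auto.
    - intros s f Hs. destruct (Hno (ex_intro _ s Hs)).
    - intros s t f Hs. destruct (Hno (ex_intro _ s Hs)).
    - intros f g Hf E x. rewrite <- E. apply Hf. }
  destruct (Hinf 1 Nat.lt_0_1) as [x Hx]. exact (Hx (Hid h HG x)).
Qed.

Lemma compatible_preserves_axis A e e' s :
  gen_subgroup S A -> infinite_order A -> is_ray adj e -> is_ray adj e' -> ~ same_end e e' ->
  end_fixed_by A e -> end_fixed_by A e' -> gen_subgroup S s -> end_compatible s A ->
  end_pair_preserved_by s e e'.
Proof.
  intros HA Hinf Re Re' N Fe Fe' Hs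
    [(z & Rz & Fsz & Faz)|(z & z' & Rz & Rz' & Nzz' & Ps & Fz & Fz')].
  - left. destruct (third_fixed_end HA Hinf Re Re' Rz N Fe Fe' Faz) as [E|E].
    + pose proof (end_fixed_transport Fsz E) as Fse.
      exact (conj Fse (end_fixed_transfer HA Hinf Re Re' N Fe Fe' Hs Fse)).
    + pose proof (end_fixed_transport Fsz E) as Fse'.
      split; [|exact Fse'].
      exact (end_fixed_transfer HA Hinf Re' Re (fun E' => N (same_end_sym E')) Fe' Fe Hs Fse').
  - destruct (third_fixed_end HA Hinf Re Re' Rz N Fe Fe' Fz) as [E1|E1];
    destruct (third_fixed_end HA Hinf Re Re' Rz' N Fe Fe' Fz') as [E2|E2];
      try (destruct (Nzz' (same_end_trans E1 (same_end_sym E2)))).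
    + exact (end_pair_preserved_transport Ps E1 E2).
    + exact (end_pair_preserved_swap (end_pair_preserved_transport Ps E1 E2)).
Qed.

Lemma compatible_fixes_end (A s : V -> V) z1 :
  (forall e e', is_ray adj e -> is_ray adj e' -> ~ same_end e e' ->
     end_fixed_by A e -> end_fixed_by A e' -> False) ->
  is_ray adj z1 -> end_fixed_by A z1 -> end_compatible s A -> end_fixed_by s z1.
Proof.
  intros NoTwo Rz1 Fz1 [(z & Rz & Fsz & Faz)|(z & z' & Rz & Rz' & N & _ & Fz & Fz')].
  - apply (end_fixed_transport Fsz). apply NNPP; intros N.
    exact (NoTwo z z1 Rz Rz1 N Faz Fz1).
  - destruct (NoTwo z z' Rz Rz' N Fz Fz').
Qed.

End Discrete.
End LocallyFinite.
End Tree.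
End Graphs.

Theorem lemma3p3 (V : Type) (adj : V -> V -> Prop)
  (HT : is_tree adj) (HLF : locally_finite adj)
  (gs : list (V -> V)) (Hgs : forall g, In g gs -> is_isom adj g)
  (Hdisc : discrete (gen_subgroup (fun f => In f gs)))
  (Hne : ~ elementary adj (gen_subgroup (fun f => In f gs)))
  (h : V -> V) (hG : gen_subgroup (fun f => In f gs) h)
  (hinf : infinite_order h) :
  exists g, In g gs /\
    ~ elementary adj (gen_subgroup (fun f => f = g \/ f = h)).
Proof.
  set (S := fun f => In f gs) in *.
  set (A := Nat.iter 2 h).
  pose proof (gen_subgroup_iter hG 2) as HA.
  pose proof (infinite_order_iter hinf Nat.lt_0_2) as HinfA.
  apply NNPP; intros Hall. apply Hne.
  assert (Hcomp : forall s, S s -> end_compatible adj s A).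
  { intros s Hs. apply elementary_end_compatible.
    - intros v. exact (infinite_order_no_fixed_vertex HT HLF Hgs Hdisc hG hinf).
    - apply NNPP; intros Hn. exact (Hall (ex_intro _ s (conj Hs Hn))). }
  destruct (classic (exists e e', is_ray adj e /\ is_ray adj e' /\ ~ same_end e e' /\
                        end_fixed_by A e /\ end_fixed_by A e'))
    as [(e & e' & Re & Re' & N & Fe & Fe')|NoTwo].
  - right; right. exists e, e'. repeat (split; [assumption|]).
    intros f Hf. refine (gen_subgroup_preserves_end_pair _ Hf). intros s Hs.
    exact (compatible_preserves_axis HT HLF Hgs Hdisc HA HinfA Re Re' N Fe Fe'
             (gen_subgroup_gen Hs) (Hcomp s Hs)).
  - destruct (generator_exists hG hinf) as [g1 Hg1].
    destruct (Hcomp g1 Hg1) as [(z1 & Rz1 & _ & Fz1)|(z & z' & Rz & Rz' & N & _ & Fz & Fz')].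
    + right; left. exists z1. split; [exact Rz1|].
      intros f Hf. refine (gen_subgroup_fixes_end _ Hf). intros s Hs.
      refine (compatible_fixes_end _ Rz1 Fz1 (Hcomp s Hs)).
      intros e e' Re Re' N Fe Fe'. apply NoTwo. exists e, e'. auto.
    + destruct NoTwo. exists z, z'. auto.
Qed.
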